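(* Under the standing assumptions (with $K\neq0$), suppose $\lambda_{\max}(M(0))<1$. Then there exists a unique $r^*\in(0,r_A)$ with $\lambda_{\max}(M(r^* ))=1$. Moreover $\lambda_{\max}(M(r))<1$ for $r\in[0,r^* )$ and $\lambda_{\max}(M(r))>1$ for $r\in(r^*,r_A)$; in the latter case there is no $\mathbf w\in\mathbb R^n$ with all $w_j>0$ and $\mathbf w^T(I-M(r))\ge\mathbf 0^T$.
   Context: Fix $n\ge 2$. $A$ and $K$ are $n\times n$ entrywise nonnegative real matrices, with $K$ not the zero matrix; $\delta_1,\dots,\delta_n\in(0,1]$, $D=K\,\mathrm{diag}(\delta_1,\dots,\delta_n)$, and $\tilde A=A+D$. $L=\mathrm{diag}(l_1,\dots,l_n)$ with all $l_j>0$. $B$ is an $n\times n$ entrywise nonnegative matrix with no zero column. Standing assumption: $\tilde A$ is irreducible and $\lambda_{\max}(\tilde A)<1$, where $\lambda_{\max}(X)$ denotes the spectral radius of a square matrix $X$. $r_A>0$ is defined by $\lambda_{\max}(\tilde A+r_AK)=1$. For $r\in[0,r_A)$, $M(r):=L[I-\tilde A-rK]^{-1}B$; note $M(0)=L(I-\tilde A)^{-1}B$. Vector inequalities are componentwise. *)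

From HB Require Import structures.
From mathcomp Require Import all_boot all_order all_algebra.
From mathcomp Require Import boolp classical_sets reals complex.
Set Implicit Arguments. Unset Strict Implicit. Unset Printing Implicit Defensive.
Import Order.TTheory GRing.Theory Num.Theory.
Local Open Scope ring_scope.

Definition cmod (R : realType) (z : R[i]) : R :=
  Num.sqrt (complex.Re z ^+ 2 + complex.Im z ^+ 2).

Definition cmx (R : realType) (n : nat) (A : 'M[R]_n) : 'M[R[i]]_n :=
  map_mx (fun x : R => (x%:C)%C) A.

Definition spec_rad (R : realType) (n : nat) (A : 'M[R]_n) : R :=
  sup [set r : R | exists z : R[i], eigenvalue (cmx A) z /\ r = cmod z]%classic.

Definition nonneg_mx (R : realType) (n : nat) (A : 'M[R]_n) : Prop :=
  forall i j, 0 <= A i j.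

Definition irreducible_mx (R : realType) (n : nat) (A : 'M[R]_n) : Prop :=
  forall i j, exists k : nat, 0 < (A ^+ k) i j.

Definition Mfun (R : realType) (n : nat) (L Atil K B : 'M[R]_n) (r : R)
  : 'M[R]_n :=
  L *m invmx (1%:M - Atil - r *: K) *m B.

(* For a nonnegative matrix P the Collatz-Wielandt radius, the infimum of the t for
   which some positive row x has x P < t x, is a real eigenvalue dominating the moduli
   of all complex eigenvalues, hence equals spec_rad P; for irreducible P it has a
   positive left eigenvector. For 0 <= r < rA the resolvent (I - Atil - r K)^-1 is
   entrywise positive, and the resolvent identity
   M r2 - M r1 = (r2 - r1) L N r1 K N r2 B with a positive middle factor makes
   r |-> spec_rad (M r) strictly increasing, with enough one-sided continuity for a
   supremum argument. It is < 1 at r = 0, and the Perron vector of Atil + rA K shows it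
   is >= 1 near rA, so it crosses 1 exactly once. Beyond the crossing, a positive w with
   w^T M r <= w^T would bound the radius by 1. *)

From mathcomp Require Import all_boot all_order all_algebra.
From mathcomp Require Import classical_sets reals complex.
From mathcomp Require Import ring lra.
Import Order.TTheory GRing.Theory Num.Theory.

Set Implicit Arguments.
Unset Strict Implicit.
Unset Printing Implicit Defensive.

Local Open Scope classical_set_scope.
Local Open Scope ring_scope.

Section FiniteExtrema.
Variables (R : realType) (I : finType).

Lemma exists_argmax (i0 : I) (F : I -> R) : exists i, forall j, F j <= F i.
Proof.
by have [i _ Hi] := @arg_maxP _ _ I i0 xpredT F isT; exists i => j; apply: Hi.
Qed.

Lemma exists_argmin (i0 : I) (F : I -> R) : exists i, forall j, F i <= F j.
Proof.
have [i Hi] := exists_argmax i0 (fun j => - F j).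
by exists i => j; move: (Hi j); rewrite lerN2.
Qed.

Lemma exists_small_step (g D : I -> R) (h : R) :
  (forall j, 0 < g j) -> (forall j, 0 <= D j) -> 0 < h ->
  exists2 d, 0 < d < h & forall j, d * D j < g j.
Proof.
move=> g_gt0 D_ge0 h_gt0.
case: (pickP (@predT I)) => [i0 _|I0]; last first.
  by exists (h / 2); [apply/andP; split; lra | move=> j; move: (I0 j)].
have [i Hi] := exists_argmin i0 (fun j => g j / (D j + 1)).
set m := g i / (D i + 1).
have D1_gt0 j : 0 < D j + 1 by have := D_ge0 j; lra.
have m_gt0 : 0 < m by rewrite /m divr_gt0.
exists (Num.min (h / 2) (m / 2)).
  by apply/andP; split; rewrite ?lt_min ?gt_min; apply/andP || apply/orP; lra.
move=> j.
have le_m2 : Num.min (h / 2) (m / 2) <= m / 2 by rewrite ge_min lexx orbT.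
have le_mD : Num.min (h / 2) (m / 2) * D j <= m / 2 * D j by rewrite ler_wpM2r.
have m_le : m * (D j + 1) <= g j.
  by rewrite -ler_pdivlMr //; apply: Hi.
have := D_ge0 j; nra.
Qed.

End FiniteExtrema.

Section ComplexModulus.
Variable R : realType.

Lemma norm_cmod (z : R[i]) : `|z| = (cmod z)%:C%C.
Proof. by rewrite normc_def. Qed.

Lemma cmod_ge0 (z : R[i]) : 0 <= cmod z.
Proof. by rewrite /cmod sqrtr_ge0. Qed.

Lemma cmodM (z w : R[i]) : cmod (z * w) = cmod z * cmod w.
Proof. by apply: (@complexI R); rewrite rmorphM /= -!norm_cmod normrM. Qed.

Lemma cmod_eq0 (z : R[i]) : (cmod z == 0) = (z == 0).
Proof. by rewrite -(inj_eq (@complexI R)) -norm_cmod normr_eq0. Qed.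

Lemma cmod_real (a : R) : 0 <= a -> cmod (a%:C)%C = a.
Proof.
by move=> a_ge0; apply: (@complexI R); rewrite -norm_cmod ger0_norm // ler0c.
Qed.

Lemma cmod_sum_le (I : finType) (v : I -> R[i]) (p : I -> R) :
  (forall k, 0 <= p k) ->
  cmod (\sum_k v k * (p k)%:C%C) <= \sum_k cmod (v k) * p k.
Proof.
move=> p_ge0; rewrite -lecR -norm_cmod rmorph_sum /=.
apply: (le_trans (ler_norm_sum _ _ _)); apply: ler_sum => k _.
by rewrite normrM norm_cmod rmorphM /= ger0_norm // ler0c.
Qed.

End ComplexModulus.

Section NonnegRows.
Variables (R : realType) (n : nat).
Implicit Types (P : 'M[R]_n) (x y : 'rV[R]_n).

Definition pos_row x := forall j, 0 < x 0 j.
Definition nneg_row x := forall j, 0 <= x 0 j.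

Lemma nneg_row_gt0 y : nneg_row y -> y != 0 -> exists j, 0 < y 0 j.
Proof.
move=> y_ge0 y_neq0; case: (pickP (fun j => 0 < y 0 j)) => [j hj|y_le0].
  by exists j.
case/eqP: y_neq0; apply/rowP => j; rewrite !mxE; apply/eqP.
by rewrite eq_le y_ge0 andbT leNgt y_le0.
Qed.

Lemma row_mulmx_le y1 y2 P j : nonneg_mx P -> (forall k, y1 0 k <= y2 0 k) ->
  (y1 *m P) 0 j <= (y2 *m P) 0 j.
Proof. by move=> P_ge0 le_y; rewrite !mxE; apply: ler_sum => k _; rewrite ler_wpM2r. Qed.

Lemma row_mulmx_ge0 y P j : nonneg_mx P -> nneg_row y -> 0 <= (y *m P) 0 j.
Proof. by move=> P_ge0 y_ge0; rewrite mxE sumr_ge0 // => k _; rewrite mulr_ge0. Qed.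

Lemma row_mulmx_entry_ge y P i j : nonneg_mx P -> nneg_row y ->
  y 0 i * P i j <= (y *m P) 0 j.
Proof.
move=> P_ge0 y_ge0; rewrite mxE (bigD1 i) //= lerDl sumr_ge0 // => k _.
exact: mulr_ge0.
Qed.

Lemma exp_mx_nneg P k : nonneg_mx P -> nonneg_mx (P ^+ k).
Proof.
move=> P_ge0; elim: k => [|k IH] i j; first by rewrite expr0 mxE ler0n.
by rewrite exprS -mulmxE mxE sumr_ge0 // => l _; apply: mulr_ge0.
Qed.

Lemma mulmx_exp_eigen y P t k : y *m P = t *: y -> y *m P ^+ k = t ^+ k *: y.
Proof.
move=> yP; elim: k => [|k IH]; first by rewrite expr0 mulmx1 scale1r.
by rewrite exprSr -mulmxE mulmxA IH -scalemxAl yP scalerA -exprSr.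
Qed.

Definition abs_row (v : 'rV[R]_n) : 'rV[R]_n := \row_k `|v 0 k|.

Lemma abs_row_nneg v : nneg_row (abs_row v).
Proof. by move=> j; rewrite mxE normr_ge0. Qed.

Lemma abs_row_eq0 v : (abs_row v == 0) = (v == 0).
Proof.
apply/eqP/eqP => [/rowP v0|->]; last by apply/rowP => k; rewrite !mxE normr0.
by apply/rowP => k; move: (v0 k); rewrite !mxE => /normr0_eq0.
Qed.

Lemma abs_row_subeig P v t : nonneg_mx P -> 0 <= t -> v *m P = t *: v ->
  forall j, t * abs_row v 0 j <= (abs_row v *m P) 0 j.
Proof.
move=> P_ge0 t_ge0 vP j; have := congr1 (fun w : 'rV[R]_n => w 0 j) vP.
rewrite [in X in _ = X]mxE => e.
rewrite [abs_row v 0 j]mxE -[t]ger0_norm // -normrM -e !mxE.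
apply: (le_trans (ler_norm_sum _ _ _)); apply: ler_sum => k _.
by rewrite normrM mxE [`|P k j|]ger0_norm.
Qed.

Definition cmod_row (v : 'rV[R[i]]_n) : 'rV[R]_n := \row_k cmod (v 0 k).

Lemma cmod_row_nneg v : nneg_row (cmod_row v).
Proof. by move=> j; rewrite mxE cmod_ge0. Qed.

Lemma cmod_row_eq0 v : (cmod_row v == 0) = (v == 0).
Proof.
apply/eqP/eqP => [/rowP v0|->]; last first.
  by apply/rowP => k; rewrite !mxE; apply/eqP; rewrite cmod_eq0.
by apply/rowP => k; move: (v0 k); rewrite !mxE => /eqP; rewrite cmod_eq0 => /eqP.
Qed.

Lemma cmod_row_subeig P v z : nonneg_mx P -> v *m cmx P = z *: v ->
  forall j, cmod z * cmod_row v 0 j <= (cmod_row v *m P) 0 j.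
Proof.
move=> P_ge0 vP j; have := congr1 (fun w : 'rV[R[i]]_n => w 0 j) vP.
rewrite [in X in X = _]mxE mxE => e.
rewrite [cmod_row v 0 j]mxE -cmodM -e [(cmod_row v *m P) 0 j]mxE.
have -> : \sum_k v 0 k * cmx P k j = \sum_k v 0 k * (P k j)%:C%C.
  by apply: eq_bigr => k _; rewrite mxE.
apply: (le_trans (cmod_sum_le _ _)) => [k|]; first exact: P_ge0.
by apply: ler_sum => k _; rewrite mxE.
Qed.

(* Let c = max_j y_j / x_j be attained at i: then y <= c x with equality at i,
   so s y_i <= (y P)_i <= c (x P)_i < c t x_i = t y_i. *)
Lemma subeig_lt_supereig P x y s t : nonneg_mx P -> pos_row x -> nneg_row y ->
  y != 0 -> (forall j, s * y 0 j <= (y *m P) 0 j) ->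
  (forall j, (x *m P) 0 j < t * x 0 j) -> s < t.
Proof.
move=> P_ge0 x_gt0 y_ge0 y_neq0 sub super.
have [j0 yj0] := nneg_row_gt0 y_ge0 y_neq0.
have [i Hi] := exists_argmax j0 (fun j => y 0 j / x 0 j).
set c := y 0 i / x 0 i.
have c_gt0 : 0 < c by apply: lt_le_trans (Hi j0); rewrite divr_gt0.
have y_le k : y 0 k <= (c *: x) 0 k by rewrite mxE -ler_pdivrMr //; apply: Hi.
have yi : y 0 i = c * x 0 i by rewrite /c divfK // gt_eqF.
have yPi := row_mulmx_le i P_ge0 y_le.
rewrite -scalemxAl [X in _ <= X]mxE in yPi.
have yi_gt0 : 0 < y 0 i by rewrite yi mulr_gt0.
suff : s * y 0 i < t * y 0 i by rewrite ltr_pM2r.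
apply: le_lt_trans (sub i) _; apply: le_lt_trans yPi _.
by rewrite yi mulrCA ltr_pM2l.
Qed.

Definition cw_bound P t := exists x, pos_row x /\ forall j, (x *m P) 0 j < t * x 0 j.

(* Only meaningful for n > 0: for n = 0 every t is a bound and the infimum is junk. *)
Definition cw_radius P := inf [set t | cw_bound P t].

Lemma cw_boundW P t t' : cw_bound P t -> t <= t' -> cw_bound P t'.
Proof.
move=> [x [x_gt0 xP]] le_tt'; exists x; split => // j.
by apply: lt_le_trans (xP j) _; rewrite ler_wpM2r // ltW.
Qed.

Lemma cw_bound_exists P : nonneg_mx P -> exists t, cw_bound P t.
Proof.
move=> P_ge0; exists (1 + \sum_k \sum_j P k j); exists (const_mx 1).
split=> [j|j]; rewrite !mxE //= mulr1.
suff : \sum_k (const_mx 1 : 'rV[R]_n) 0 k * P k j <= \sum_k \sum_j P k j by lra.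
apply: ler_sum => k _; rewrite mxE mul1r (bigD1 j) //=.
by rewrite lerDl sumr_ge0.
Qed.

End NonnegRows.

Section CollatzWielandt.
Variables (R : realType) (n : nat).
Hypothesis n_gt0 : (0 < n)%N.
Implicit Types (P : 'M[R]_n) (x y : 'rV[R]_n).

Let j0 : 'I_n := Ordinal n_gt0.

Lemma pos_row_neq0 x : pos_row x -> x != 0.
Proof. by move=> x_gt0; apply/eqP => x0; have := x_gt0 j0; rewrite x0 mxE ltxx. Qed.

Lemma cw_bound_gt0 P t : nonneg_mx P -> cw_bound P t -> 0 < t.
Proof.
move=> P_ge0 [x [x_gt0 xP]].
have : 0 < t * x 0 j0 by apply: le_lt_trans (xP j0); apply: row_mulmx_ge0 => // j; apply: ltW.
by rewrite pmulr_lgt0.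
Qed.

Lemma cw_bound_open P t : cw_bound P t -> exists2 t', t' < t & cw_bound P t'.
Proof.
move=> [x [x_gt0 xP]].
have [i Hi] := exists_argmax j0 (fun j => (x *m P) 0 j / x 0 j).
set m := (x *m P) 0 i / x 0 i.
have m_lt : m < t by rewrite /m ltr_pdivrMr.
exists ((m + t) / 2); first lra.
exists x; split => // j.
have : (x *m P) 0 j / x 0 j <= m by apply: Hi.
rewrite ler_pdivrMr // => h; apply: le_lt_trans h _.
by rewrite ltr_pM2r //; lra.
Qed.

Lemma cw_bound_unitmx P t : nonneg_mx P -> cw_bound P t -> t%:M - P \in unitmx.
Proof.
move=> P_ge0 bound; have t_gt0 := cw_bound_gt0 P_ge0 bound.
have [x [x_gt0 xP]] := bound.
rewrite unitmxE unitfE; apply/negP => /det0P [v v_neq0 v0].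
have vP : v *m P = t *: v.
  by apply/eqP; rewrite eq_sym -subr_eq0 -mul_mx_scalar -mulmxBr v0.
suff : t < t by rewrite ltxx.
apply: (subeig_lt_supereig P_ge0 x_gt0 (abs_row_nneg v) _ _ xP).
  by rewrite abs_row_eq0.
exact: abs_row_subeig (ltW t_gt0) vP.
Qed.

(* Take c = min_j y_j / x_j at i; if c < 0 then t y_i = b_i + (y P)_i >= b_i + c (x P)_i > t y_i. *)
Lemma cw_bound_row_inv_ge0 P t b : nonneg_mx P -> cw_bound P t -> nneg_row b ->
  nneg_row (b *m invmx (t%:M - P)).
Proof.
move=> P_ge0 bound b_ge0; have t_unit := cw_bound_unitmx P_ge0 bound.
have [x [x_gt0 xP]] := bound.
set y := b *m invmx _.
have yb : y *m (t%:M - P) = b by rewrite /y -mulmxA mulVmx // mulmx1.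
case: (pickP (fun j => y 0 j < 0)) => [j yj_lt0|y_ge0]; last first.
  by move=> j; rewrite leNgt y_ge0.
have [i Hi] := exists_argmin j0 (fun j => y 0 j / x 0 j).
set c := y 0 i / x 0 i.
have c_lt0 : c < 0 by apply: le_lt_trans (Hi j) _; rewrite pmulr_llt0 ?invr_gt0.
have y_ge k : (c *: x) 0 k <= y 0 k by rewrite mxE -ler_pdivlMr //; apply: Hi.
have yi : y 0 i = c * x 0 i by rewrite /c divfK // gt_eqF.
have yPi := row_mulmx_le i P_ge0 y_ge.
rewrite -scalemxAl [X in X <= _]mxE in yPi.
have ybi : t * y 0 i = b 0 i + (y *m P) 0 i.
  have := congr1 (fun w : 'rV[R]_n => w 0 i) yb.
  by rewrite mulmxBr mul_mx_scalar !mxE => <-; ring.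
have : c * (t * x 0 i) < c * (x *m P) 0 i by rewrite ltr_nM2l.
rewrite -mulrCA -yi; have := b_ge0 i; lra.
Qed.

Lemma cw_bound_inv_nneg P t : nonneg_mx P -> cw_bound P t ->
  nonneg_mx (invmx (t%:M - P)).
Proof.
move=> P_ge0 bound k j.
have ek_ge0 : nneg_row ('e_k : 'rV[R]_n) by move=> l; rewrite mxE ler0n.
by have := cw_bound_row_inv_ge0 P_ge0 bound ek_ge0 j; rewrite -rowE mxE.
Qed.

Section Radius.
Variable P : 'M[R]_n.
Hypothesis P_ge0 : nonneg_mx P.

Let bounds_lbound : has_lbound [set t | cw_bound P t].
Proof. by exists 0 => t /= /(cw_bound_gt0 P_ge0) /ltW. Qed.

Let bounds_neq0 : [set t | cw_bound P t] !=set0.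
Proof. by have [t bound] := cw_bound_exists P_ge0; exists t. Qed.

Lemma cw_radius_le t : cw_bound P t -> cw_radius P <= t.
Proof. by move=> bound; apply: (ge_inf bounds_lbound). Qed.

Lemma cw_radius_not_bound : ~ cw_bound P (cw_radius P).
Proof.
by move=> /cw_bound_open [t' lt_t' /cw_radius_le]; rewrite leNgt lt_t'.
Qed.

Lemma cw_radius_lt t : cw_bound P t -> cw_radius P < t.
Proof.
move=> bound; rewrite lt_neqAle cw_radius_le // andbT.
by apply/eqP => e; apply: cw_radius_not_bound; rewrite e.
Qed.

Lemma cw_bound_gt_radius t : cw_radius P < t -> cw_bound P t.
Proof. by move=> /(inf_lt bounds_neq0) [t' bound lt_t']; apply: cw_boundW bound (ltW _). Qed.

Lemma le_cw_radius y s : nneg_row y -> y != 0 ->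
  (forall j, s * y 0 j <= (y *m P) 0 j) -> s <= cw_radius P.
Proof.
move=> y_ge0 y_neq0 sub; apply: lb_le_inf bounds_neq0 _ => t [x [x_gt0 xP]].
exact/ltW/(subeig_lt_supereig P_ge0 x_gt0 y_ge0 y_neq0 sub xP).
Qed.

Lemma lt_cw_radius y s : pos_row y ->
  (forall j, s * y 0 j < (y *m P) 0 j) -> s < cw_radius P.
Proof.
move=> y_gt0 sub.
have [i Hi] := exists_argmin j0 (fun j => ((y *m P) 0 j - s * y 0 j) / y 0 j).
set e := ((y *m P) 0 i - s * y 0 i) / y 0 i.
have e_gt0 : 0 < e by rewrite divr_gt0 // subr_gt0.
suff : s + e <= cw_radius P by apply: lt_le_trans; rewrite ltrDl.
apply: (le_cw_radius (fun j => ltW (y_gt0 j)) (pos_row_neq0 y_gt0)) => j.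
by have := Hi j; rewrite -/e ler_pdivlMr // mulrDl; lra.
Qed.

Lemma cw_radius_ge0 : 0 <= cw_radius P.
Proof. by apply: lb_le_inf bounds_neq0 _ => t /(cw_bound_gt0 P_ge0) /ltW. Qed.

Lemma cw_radius_le_supereig w s : pos_row w ->
  (forall j, (w *m P) 0 j <= s * w 0 j) -> cw_radius P <= s.
Proof.
move=> w_gt0 super; rewrite leNgt; apply/negP => lt_s.
apply: cw_radius_not_bound; exists w; split => // j.
by apply: le_lt_trans (super j) _; rewrite ltr_pM2r.
Qed.

(* With m bounding -y entrywise and t = T + 1/(2m) a bound, the resolvent identity
   y = y_t + (t - T) y N_t gives y >= y_t - y_t / 2 >= 0, where N_t, y_t >= 0. *)
Lemma cw_radius_row_inv_ge0 : (cw_radius P)%:M - P \in unitmx ->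
  nneg_row (const_mx 1 *m invmx ((cw_radius P)%:M - P)).
Proof.
set T := cw_radius P; set o : 'rV[R]_n := const_mx 1 => T_unit.
set y := o *m _; set m := 1 + \sum_k `|y 0 k|.
have yT : y *m (T%:M - P) = o by rewrite /y -mulmxA mulVmx // mulmx1.
have m_gt0 : 0 < m by rewrite /m ltr_pwDl // sumr_ge0.
have y_ge k : - m <= y 0 k.
  have : `|y 0 k| <= \sum_k `|y 0 k| by rewrite (bigD1 k) //= lerDl sumr_ge0.
  by have := ler_norm (- y 0 k); rewrite normrN /m; lra.
set t := T + (2 * m)^-1.
have t_bound : cw_bound P t by apply: cw_bound_gt_radius; rewrite ltrDl invr_gt0 mulr_gt0.
set N := invmx (t%:M - P); set yt := o *m N.
have N_ge0 : nonneg_mx N by apply: cw_bound_inv_nneg.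
have yt_ge0 : nneg_row yt by apply: cw_bound_row_inv_ge0 => // j; rewrite mxE.
have y_res : y = yt + (2 * m)^-1 *: (y *m N).
  have tT : t%:M - P = (T%:M - P) + ((2 * m)^-1)%:M.
    by apply/matrixP => a b; rewrite !mxE /t; case: (a == b) => /=; ring.
  have := congr1 (mulmx^~ N) (congr1 (mulmx y) tT).
  rewrite /= -mulmxA mulmxV ?mulmx1; last exact: cw_bound_unitmx.
  by rewrite mulmxDr yT mul_mx_scalar mulmxDl -scalemxAl.
move=> i; have yNi : - m * yt 0 i <= (y *m N) 0 i.
  rewrite /yt !mxE mulr_sumr; apply: ler_sum => l _.
  by rewrite /o mxE mul1r ler_wpM2r.
have -> : y 0 i = yt 0 i + (2 * m)^-1 * (y *m N) 0 i.
  by rewrite {1}y_res; set u := y *m N; rewrite !mxE.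
have : (2 * m)^-1 * (- m * yt 0 i) <= (2 * m)^-1 * (y *m N) 0 i.
  by rewrite ler_wpM2l // invr_ge0 mulr_ge0 // ltW.
have -> : (2 * m)^-1 * (- m * yt 0 i) = - (yt 0 i / 2) by field; rewrite gt_eqF.
by have := yt_ge0 i; lra.
Qed.

Lemma det_cw_radius : \det ((cw_radius P)%:M - P) = 0.
Proof.
apply/eqP; apply: contraT; set T := cw_radius P => det_neq0.
have T_unit : T%:M - P \in unitmx by rewrite unitmxE unitfE.
set o : 'rV[R]_n := const_mx 1; set y := o *m invmx (T%:M - P).
have y_ge0 : nneg_row y := cw_radius_row_inv_ge0 T_unit.
have yT j : T * y 0 j = 1 + (y *m P) 0 j.
  have := congr1 (fun w : 'rV[R]_n => w 0 j) (mulmxKV T_unit o).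
  by rewrite -/y mulmxBr mul_mx_scalar !mxE => <-; ring.
case: cw_radius_not_bound; exists y; split=> j; last by rewrite yT; lra.
have yPj := row_mulmx_ge0 j P_ge0 y_ge0.
rewrite lt_neqAle y_ge0 andbT; apply/eqP => yj0.
by have := yT j; rewrite -yj0 mulr0; lra.
Qed.

Lemma cw_radius_eigen : exists2 v : 'rV[R]_n, v != 0 & v *m P = cw_radius P *: v.
Proof.
have /eqP/det0P [v v_neq0 v0] := det_cw_radius.
by exists v => //; apply/eqP; rewrite eq_sym -subr_eq0 -mul_mx_scalar -mulmxBr v0.
Qed.

Lemma spec_rad_cw_radius : spec_rad P = cw_radius P.
Proof.
set T := cw_radius P.
set S := [set r : R | exists z : R[i], eigenvalue (cmx P) z /\ r = cmod z].
have S_le r : S r -> r <= T.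
  move=> [z [/eigenvalueP [v vP v_neq0] ->]].
  apply: (le_cw_radius (cmod_row_nneg v)); first by rewrite cmod_row_eq0.
  exact: cmod_row_subeig.
have S_T : S T.
  exists T%:C%C; split; last by rewrite cmod_real // cw_radius_ge0.
  have [v v_neq0 vP] := cw_radius_eigen.
  apply/eigenvalueP; exists (map_mx (real_complex R) v).
    apply/rowP => j; rewrite !mxE.
    under eq_bigr do rewrite !mxE -rmorphM.
    rewrite -rmorph_sum -rmorphM; congr (_%:C)%C.
    by have := congr1 (fun w : 'rV[R]_n => w 0 j) vP; rewrite !mxE.
  apply: contra v_neq0 => /eqP/rowP v0; apply/eqP/rowP => j.
  by apply: (@complexI R); have := v0 j; rewrite !mxE => ->.
apply/le_anti/andP; split.
  by apply: ge_sup; [exists T | move=> r /S_le].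
by apply: ub_le_sup => //; exists T => r /S_le.
Qed.

End Radius.
End CollatzWielandt.

Section Irreducible.
Variables (R : realType) (n : nat).
Hypothesis n_gt0 : (0 < n)%N.
Variable P : 'M[R]_n.
Hypotheses (P_ge0 : nonneg_mx P) (P_irr : irreducible_mx P).

Let j0 : 'I_n := Ordinal n_gt0.
Let path_len (i j : 'I_n) : nat := xchoose (P_irr i j).
Let E : 'M[R]_n := \sum_(k < (\max_(ij : 'I_n * 'I_n) path_len ij.1 ij.2).+1) P ^+ k.

Let row_mulmx_E_gt0 u : nneg_row u -> u != 0 -> pos_row (u *m E).
Proof.
move=> u_ge0 u_neq0 j; have [i ui] := nneg_row_gt0 u_ge0 u_neq0.
have k_lt : (path_len i j < (\max_(ij : 'I_n * 'I_n) path_len ij.1 ij.2).+1)%N.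
  by rewrite ltnS; apply: (leq_bigmax (F := fun ij : 'I_n * 'I_n => path_len ij.1 ij.2) (i, j)).
rewrite /E mulmx_sumr summxE (bigD1 (Ordinal k_lt)) //=.
have uPk : 0 < (u *m P ^+ path_len i j) 0 j.
  apply: lt_le_trans (row_mulmx_entry_ge i j (exp_mx_nneg _ P_ge0) u_ge0).
  by rewrite mulr_gt0 //; apply: (xchooseP (P_irr i j)).
apply: lt_le_trans uPk _; rewrite lerDl sumr_ge0 // => k _.
exact: row_mulmx_ge0 (exp_mx_nneg _ P_ge0) u_ge0.
Qed.

Let E_mulmxC : E *m P = P *m E.
Proof.
rewrite /E mulmx_suml mulmx_sumr; apply: eq_bigr => k _.
by rewrite !mulmxE -exprSr exprS.
Qed.

(* The nonnegative defect d = |v| P - T |v| is smoothed by E into a positive vector;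
   if d != 0 then w = |v| E satisfies w P >= (T + eps) w, against the definition of T. *)
Lemma perron_row : exists y, pos_row y /\ y *m P = cw_radius P *: y.
Proof.
set T := cw_radius P; have T_ge0 : 0 <= T := cw_radius_ge0 n_gt0 P_ge0.
have [v v_neq0 vP] := cw_radius_eigen n_gt0 P_ge0.
have [a [a_ge0 a_neq0 aP]] : exists a, [/\ nneg_row a, a != 0 &
    forall j, T * a 0 j <= (a *m P) 0 j].
  exists (abs_row v); split; first exact: abs_row_nneg.
    by rewrite abs_row_eq0.
  exact: abs_row_subeig.
set d := a *m P - T *: a.
have d_ge0 : nneg_row d by move=> j; have := aP j; rewrite /d !mxE subr_ge0.
have [d0|d_neq0] := eqVneq d 0.
  have aP' : a *m P = T *: a by apply/eqP; rewrite -subr_eq0 -/d d0.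
  exists a; split => // j.
  rewrite lt_neqAle a_ge0 andbT; apply/eqP => aj0.
  have [i ai] := nneg_row_gt0 a_ge0 a_neq0.
  have := row_mulmx_entry_ge i j (exp_mx_nneg (path_len i j) P_ge0) a_ge0.
  rewrite (mulmx_exp_eigen _ aP') mxE -aj0 mulr0 leNgt => /negP; apply.
  by rewrite mulr_gt0 //; apply: (xchooseP (P_irr i j)).
exfalso; set w := a *m E.
have w_gt0 := row_mulmx_E_gt0 a_ge0 a_neq0.
have dE_gt0 := row_mulmx_E_gt0 d_ge0 d_neq0.
have wP : w *m P = T *: w + d *m E.
  rewrite /w -mulmxA E_mulmxC mulmxA.
  have -> : a *m P = d + T *: a by rewrite /d subrK.
  by rewrite mulmxDl -scalemxAl addrC.
have [i Hi] := exists_argmin j0 (fun j => (d *m E) 0 j / w 0 j).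
set eps := (d *m E) 0 i / w 0 i.
have eps_gt0 : 0 < eps by rewrite divr_gt0.
suff : T + eps <= T by rewrite gerDl leNgt eps_gt0.
apply: (le_cw_radius P_ge0 (fun j => ltW (w_gt0 j)) (pos_row_neq0 n_gt0 w_gt0)).
move=> j; have -> : (w *m P) 0 j = T * w 0 j + (d *m E) 0 j by rewrite wP !mxE.
by rewrite mulrDl lerD2l -ler_pdivlMr //; apply: Hi.
Qed.

Lemma cw_bound_of_subeig z s : nneg_row z -> z != 0 ->
  (forall j, (z *m P) 0 j <= s * z 0 j) -> z *m P != s *: z -> cw_bound P s.
Proof.
move=> z_ge0 z_neq0 super ne.
set d := s *: z - z *m P.
have d_ge0 : nneg_row d by move=> j; have := super j; rewrite /d !mxE subr_ge0.
have d_neq0 : d != 0 by rewrite /d subr_eq0 eq_sym.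
set w := z *m E.
have dE_gt0 := row_mulmx_E_gt0 d_ge0 d_neq0.
have wP : w *m P = s *: w - d *m E.
  rewrite /w -mulmxA E_mulmxC mulmxA.
  have -> : z *m P = s *: z - d by rewrite /d opprB addrC subrK.
  by rewrite mulmxBl -scalemxAl.
exists w; split; first exact: row_mulmx_E_gt0.
move=> j; have -> : (w *m P) 0 j = s * w 0 j - (d *m E) 0 j by rewrite wP !mxE.
by have := dE_gt0 j; lra.
Qed.

End Irreducible.

Section MatrixOrder.
Variables (R : realType) (n : nat).
Implicit Types (A B C : 'M[R]_n).

Definition lemx A B := forall i j, A i j <= B i j.

Lemma mulmx_nneg A B : nonneg_mx A -> nonneg_mx B -> nonneg_mx (A *m B).
Proof. by move=> A_ge0 B_ge0 i j; rewrite mxE sumr_ge0 // => k _; apply: mulr_ge0. Qed.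

Lemma nonneg_mx_entry_gt0 A : nonneg_mx A -> A != 0 -> exists i j, 0 < A i j.
Proof.
move=> A_ge0 A_neq0.
case: (pickP (fun ij : 'I_n * 'I_n => 0 < A ij.1 ij.2)) => [[i j] Aij|A_le0].
  by exists i, j.
case/eqP: A_neq0; apply/matrixP => i j; rewrite mxE; apply/eqP.
by rewrite eq_le A_ge0 andbT leNgt (A_le0 (i, j)).
Qed.

Lemma mulmx_entry_ge A B i k j : nonneg_mx A -> nonneg_mx B ->
  A i k * B k j <= (A *m B) i j.
Proof.
move=> A_ge0 B_ge0; rewrite mxE (bigD1 k) //= lerDl sumr_ge0 // => l _.
exact: mulr_ge0.
Qed.

Lemma lemx_mulr A B C : nonneg_mx C -> lemx A B -> lemx (A *m C) (B *m C).
Proof. by move=> C_ge0 le_AB i j; rewrite !mxE; apply: ler_sum => k _; rewrite ler_wpM2r. Qed.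

Lemma lemx_mull C A B : nonneg_mx C -> lemx A B -> lemx (C *m A) (C *m B).
Proof. by move=> C_ge0 le_AB i j; rewrite !mxE; apply: ler_sum => k _; rewrite ler_wpM2l. Qed.

Lemma lemx_mul2 A1 A2 B1 B2 : nonneg_mx A1 -> nonneg_mx B1 ->
  lemx A1 A2 -> lemx B1 B2 -> lemx (A1 *m B1) (A2 *m B2).
Proof.
by move=> A1_ge0 B1_ge0 le_A le_B i j; rewrite !mxE; apply: ler_sum => k _; apply: ler_pM.
Qed.

Lemma lemx_exp A B k : nonneg_mx A -> lemx A B -> lemx (A ^+ k) (B ^+ k).
Proof.
move=> A_ge0 le_AB; elim: k => [|k IH]; first by move=> i j; rewrite !expr0.
by rewrite !exprS -!mulmxE; apply: lemx_mul2 => //; apply: exp_mx_nneg.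
Qed.

Lemma row_mulmx_lemx (x : 'rV[R]_n) A B j : nneg_row x -> lemx A B ->
  (x *m A) 0 j <= (x *m B) 0 j.
Proof. by move=> x_ge0 le_AB; rewrite !mxE; apply: ler_sum => k _; rewrite ler_wpM2l. Qed.

Lemma irreducible_mxW A B : nonneg_mx A -> lemx A B -> irreducible_mx A ->
  irreducible_mx B.
Proof.
move=> A_ge0 le_AB A_irr i j; have [k Ak] := A_irr i j; exists k.
exact: lt_le_trans Ak (lemx_exp k A_ge0 le_AB i j).
Qed.

Lemma mulmx_gt0_nzcol A B : (forall i j, 0 < A i j) -> nonneg_mx B ->
  (forall j, exists i, B i j != 0) -> forall i j, 0 < (A *m B) i j.
Proof.
move=> A_gt0 B_ge0 B_col i j; have [k Bkj] := B_col j.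
apply: lt_le_trans (mulmx_entry_ge i k j (fun a b => ltW (A_gt0 a b)) B_ge0).
by rewrite mulr_gt0 // lt_neqAle eq_sym Bkj B_ge0.
Qed.

Lemma diag_mx_nneg (d : 'rV[R]_n) : (forall j, 0 <= d 0 j) -> nonneg_mx (diag_mx d).
Proof. by move=> d_ge0 i j; rewrite mxE; case: (i == j); rewrite /= ?mulr1n ?mulr0n. Qed.

Lemma diag_mulmx_gt0 (d : 'rV[R]_n) A : (forall j, 0 < d 0 j) ->
  (forall i j, 0 < A i j) -> forall i j, 0 < (diag_mx d *m A) i j.
Proof. by move=> d_gt0 A_gt0 i j; rewrite mul_diag_mx mxE mulr_gt0. Qed.

End MatrixOrder.

Section Model.
Variables (R : realType) (n : nat).
Hypothesis n_gt0 : (0 < n)%N.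
Variables (A K B : 'M[R]_n) (delta l : 'rV[R]_n) (rA : R).
Hypotheses (A_ge0 : nonneg_mx A) (K_ge0 : nonneg_mx K) (K_neq0 : K != 0)
  (delta_ge0 : forall j, 0 <= delta 0 j) (l_gt0 : forall j, 0 < l 0 j)
  (B_ge0 : nonneg_mx B) (B_col : forall j, exists i, B i j != 0)
  (Atil_irr : irreducible_mx (A + K *m diag_mx delta))
  (rA_gt0 : 0 < rA) (spec_rad_rA : spec_rad (A + K *m diag_mx delta + rA *: K) = 1).

Let j0 : 'I_n := Ordinal n_gt0.
Let Atil := A + K *m diag_mx delta.
Let Q r := Atil + r *: K.
Let N r := invmx (1%:M - Q r).
Let M r := Mfun (diag_mx l) Atil K B r.

Lemma Atil_nneg : nonneg_mx Atil.
Proof.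
move=> i j; rewrite /Atil mul_mx_diag !mxE.
by apply: addr_ge0 => //; apply: mulr_ge0.
Qed.

Lemma Q_nneg r : 0 <= r -> nonneg_mx (Q r).
Proof.
move=> r_ge0 i j; have := Atil_nneg i j; rewrite /Q !mxE => Atil_ij.
by rewrite addr_ge0 // mulr_ge0.
Qed.

Lemma Q_irr r : 0 <= r -> irreducible_mx (Q r).
Proof.
move=> r_ge0; have le_Q : lemx Atil (Q r).
  by move=> a b; rewrite /Q !mxE lerDl mulr_ge0.
exact: irreducible_mxW Atil_nneg le_Q Atil_irr.
Qed.

Lemma Q_sub r1 r2 : Q r1 = Q r2 - (r2 - r1) *: K.
Proof. by apply/matrixP => a b; rewrite /Q !mxE; ring. Qed.

Lemma row_mulmx_K_neq0 z : pos_row z -> z *m K != 0.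
Proof.
move=> z_gt0; have [a [b K_ab]] := nonneg_mx_entry_gt0 K_ge0 K_neq0.
have := row_mulmx_entry_ge a b K_ge0 (fun j => ltW (z_gt0 j)).
by apply: contraTneq => ->; rewrite mxE -ltNge mulr_gt0.
Qed.

Lemma perron_row_rA : exists z, pos_row z /\ z *m Q rA = z.
Proof.
have Q_ge0 := Q_nneg (ltW rA_gt0).
have [z [z_gt0 zQ]] := perron_row n_gt0 Q_ge0 (Q_irr (ltW rA_gt0)).
exists z; split => //.
by rewrite zQ -(spec_rad_cw_radius n_gt0 Q_ge0) spec_rad_rA scale1r.
Qed.

(* The Perron vector z of Q rA gives z Q r = z - (rA - r) z K, a nonzero defect. *)
Lemma Q_cw_bound1 r : 0 <= r < rA -> cw_bound (Q r) 1.
Proof.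
case/andP=> r_ge0 r_lt; have [z [z_gt0 zQ]] := perron_row_rA.
have z_ge0 : nneg_row z by move=> j; apply: ltW.
have zQr : z *m Q r = z - (rA - r) *: (z *m K) by rewrite (Q_sub r rA) mulmxBr zQ -scalemxAr.
have rAr_gt0 : 0 < rA - r by rewrite subr_gt0.
apply: (cw_bound_of_subeig (Q_nneg r_ge0) (Q_irr r_ge0) z_ge0 (pos_row_neq0 n_gt0 z_gt0)).
  move=> j; have := mulr_ge0 (ltW rAr_gt0) (row_mulmx_ge0 j K_ge0 z_ge0).
  by rewrite zQr; set u := z *m K; rewrite !mxE; lra.
rewrite zQr scale1r; apply: contra (row_mulmx_K_neq0 z_gt0).
by rewrite -subr_eq0 addrAC subrr add0r oppr_eq0 scaler_eq0 (gt_eqF rAr_gt0).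
Qed.

Lemma M_N r : M r = diag_mx l *m N r *m B.
Proof. by rewrite /M /Mfun /N /Q [in RHS]opprD addrA. Qed.

Section Resolvent.
Variable r : R.
Hypothesis r_range : 0 <= r < rA.

Let r_ge0 : 0 <= r. Proof. by case/andP: r_range. Qed.

Lemma N_unitmx : 1%:M - Q r \in unitmx.
Proof. exact (cw_bound_unitmx n_gt0 (Q_nneg r_ge0) (Q_cw_bound1 r_range)). Qed.

Lemma N_nneg : nonneg_mx (N r).
Proof. exact (cw_bound_inv_nneg n_gt0 (Q_nneg r_ge0) (Q_cw_bound1 r_range)). Qed.

Lemma exp_Q_le_N k : lemx (Q r ^+ k) (N r).
Proof.
have N_fix : N r = 1%:M + Q r *m N r.
  by have := mulmxV N_unitmx; rewrite mulmxBl mul1mx => <-; rewrite subrK.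
have QN_ge0 : nonneg_mx (Q r *m N r) := mulmx_nneg (Q_nneg r_ge0) N_nneg.
have QN_le : lemx (Q r *m N r) (N r).
  move=> i j; rewrite [in X in _ <= X]N_fix [in X in _ <= X]mxE lerDr mxE.
  by case: (i == j); rewrite /= ?mulr1n ?mulr0n.
elim: k => [|k IH] i j.
  by rewrite expr0 [in X in _ <= X]N_fix [in X in _ <= X]mxE lerDl.
rewrite exprS -mulmxE; apply: le_trans (QN_le i j).
exact: lemx_mull (Q_nneg r_ge0) IH i j.
Qed.

Lemma N_gt0 i j : 0 < N r i j.
Proof. by have [k Qk] := Q_irr r_ge0 i j; apply: lt_le_trans Qk (exp_Q_le_N k i j). Qed.

Lemma M_gt0 i j : 0 < M r i j.
Proof. by rewrite M_N; apply: mulmx_gt0_nzcol => //; apply: diag_mulmx_gt0 N_gt0. Qed.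

Lemma M_nneg : nonneg_mx (M r).
Proof. by move=> i j; apply/ltW/M_gt0. Qed.

Lemma M_irr : irreducible_mx (M r).
Proof. by move=> i j; exists 1%N; rewrite expr1 M_gt0. Qed.

Lemma spec_rad_M : spec_rad (M r) = cw_radius (M r).
Proof. exact (spec_rad_cw_radius n_gt0 M_nneg). Qed.

End Resolvent.

Lemma N_resolvent r1 r2 : 0 <= r1 < rA -> 0 <= r2 < rA ->
  N r2 = N r1 + (r2 - r1) *: (N r1 *m K *m N r2).
Proof.
move=> r1_range r2_range.
have dQ : (1%:M - Q r1) - (1%:M - Q r2) = (r2 - r1) *: K.
  by apply/matrixP => a b; rewrite /Q !mxE; ring.
have : N r1 *m ((1%:M - Q r1) - (1%:M - Q r2)) *m N r2 = N r2 - N r1.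
  rewrite mulmxBr mulmxBl mulVmx ?N_unitmx // mul1mx -mulmxA.
  by rewrite mulmxV ?N_unitmx // mulmx1.
by rewrite dQ -scalemxAr -scalemxAl => ->; rewrite addrC subrK.
Qed.

Let Mdiff r1 r2 := diag_mx l *m (N r1 *m K *m N r2) *m B.

Lemma M_resolvent r1 r2 : 0 <= r1 < rA -> 0 <= r2 < rA ->
  M r2 = M r1 + (r2 - r1) *: Mdiff r1 r2.
Proof.
move=> r1_range r2_range; rewrite !M_N (N_resolvent r1_range r2_range).
by rewrite mulmxDr mulmxDl /Mdiff -scalemxAr -scalemxAl.
Qed.

Lemma row_M_resolvent (y : 'rV[R]_n) r1 r2 j : 0 <= r1 < rA -> 0 <= r2 < rA ->
  (y *m M r2) 0 j = (y *m M r1) 0 j + (r2 - r1) * (y *m Mdiff r1 r2) 0 j.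
Proof.
move=> r1_range r2_range; rewrite (M_resolvent r1_range r2_range) mulmxDr -scalemxAr.
by set u := y *m M r1; set v := y *m Mdiff r1 r2; rewrite !mxE.
Qed.

Lemma Mdiff_nneg r1 r2 : 0 <= r1 < rA -> 0 <= r2 < rA -> nonneg_mx (Mdiff r1 r2).
Proof.
move=> r1_range r2_range; apply: mulmx_nneg B_ge0.
apply: mulmx_nneg; first by apply: diag_mx_nneg => j; apply: ltW.
by apply: mulmx_nneg (N_nneg r2_range); apply: mulmx_nneg (N_nneg r1_range) K_ge0.
Qed.

Lemma Mdiff_gt0 r1 r2 : 0 <= r1 < rA -> 0 <= r2 < rA ->
  forall i j, 0 < Mdiff r1 r2 i j.
Proof.
move=> r1_range r2_range; apply: mulmx_gt0_nzcol => //; apply: diag_mulmx_gt0 => // i j.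
have [a [b K_ab]] := nonneg_mx_entry_gt0 K_ge0 K_neq0.
apply: lt_le_trans (mulmx_entry_ge i b j (mulmx_nneg (N_nneg r1_range) K_ge0) (N_nneg r2_range)).
rewrite mulr_gt0 ?N_gt0 //.
apply: lt_le_trans (mulmx_entry_ge i a b (N_nneg r1_range) K_ge0).
by rewrite mulr_gt0 ?N_gt0.
Qed.

Lemma N_le r1 r2 : 0 <= r1 -> r1 <= r2 -> r2 < rA -> lemx (N r1) (N r2).
Proof.
move=> r1_ge0 le_r r2_lt.
have r1_range : 0 <= r1 < rA by rewrite r1_ge0 (le_lt_trans le_r r2_lt).
have r2_range : 0 <= r2 < rA by rewrite (le_trans r1_ge0 le_r) r2_lt.
move=> i j; rewrite (N_resolvent r1_range r2_range).
move: (N r1 *m K *m N r2) (mulmx_nneg (mulmx_nneg (N_nneg r1_range) K_ge0) (N_nneg r2_range)).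
by move=> X X_ge0; rewrite !mxE lerDl mulr_ge0 ?subr_ge0.
Qed.

Lemma Mdiff_le r1 r2 r0 : 0 <= r1 <= r0 -> 0 <= r2 <= r0 -> r0 < rA ->
  lemx (Mdiff r1 r2) (Mdiff r0 r0).
Proof.
case/andP=> r1_ge0 le_r1 /andP[r2_ge0 le_r2] r0_lt.
have r1_range : 0 <= r1 < rA by rewrite r1_ge0 (le_lt_trans le_r1 r0_lt).
have r2_range : 0 <= r2 < rA by rewrite r2_ge0 (le_lt_trans le_r2 r0_lt).
apply: lemx_mulr B_ge0 _; apply: lemx_mull; first by apply: diag_mx_nneg => j; apply: ltW.
apply: lemx_mul2; first exact: mulmx_nneg (N_nneg r1_range) K_ge0.
- exact: N_nneg.
- by apply: lemx_mulr K_ge0 _; apply: N_le.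
- exact: N_le.
Qed.

(* Compare the Perron vector y of M r1 against M r2 = M r1 + (r2 - r1) Mdiff, Mdiff > 0. *)
Lemma cw_radius_M_lt r1 r2 : 0 <= r1 -> r1 < r2 -> r2 < rA ->
  cw_radius (M r1) < cw_radius (M r2).
Proof.
move=> r1_ge0 lt_r r2_lt.
have r1_range : 0 <= r1 < rA by rewrite r1_ge0 (lt_trans lt_r r2_lt).
have r2_range : 0 <= r2 < rA by rewrite (le_trans r1_ge0 (ltW lt_r)) r2_lt.
have [y [y_gt0 yM]] := perron_row n_gt0 (M_nneg r1_range) (M_irr r1_range).
apply: (lt_cw_radius n_gt0 (M_nneg r2_range) y_gt0) => j.
rewrite (row_M_resolvent _ _ r1_range r2_range) yM [(_ *: y) 0 j]mxE ltrDl.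
rewrite mulr_gt0 ?subr_gt0 //.
have := row_mulmx_entry_ge j0 j (Mdiff_nneg r1_range r2_range) (fun k => ltW (y_gt0 k)).
by apply: lt_le_trans; rewrite mulr_gt0 ?Mdiff_gt0.
Qed.

Lemma cw_radius_M_le r1 r2 : 0 <= r1 -> r1 <= r2 -> r2 < rA ->
  cw_radius (M r1) <= cw_radius (M r2).
Proof.
move=> r1_ge0; rewrite le_eqVlt => /predU1P[->//|lt_r r2_lt].
exact/ltW/cw_radius_M_lt.
Qed.

Lemma cw_radius_M_right a b t : 0 <= a -> a < b -> b < rA -> cw_radius (M a) < t ->
  exists2 r, a < r < b & cw_radius (M r) < t.
Proof.
move=> a_ge0 lt_ab b_lt lt_t.
have a_range : 0 <= a < rA by rewrite a_ge0 (lt_trans lt_ab b_lt).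
have b_range : 0 <= b < rA by rewrite (le_trans a_ge0 (ltW lt_ab)) b_lt.
have [x [x_gt0 xM]] := cw_bound_gt_radius (M_nneg a_range) lt_t.
have x_ge0 : nneg_row x by move=> j; apply: ltW.
have [d /andP[d_gt0 d_lt] small] := exists_small_step
  (g := fun j => t * x 0 j - (x *m M a) 0 j) (D := fun j => (x *m Mdiff b b) 0 j)
  (fun j => ltac:(by rewrite subr_gt0))
  (fun j => row_mulmx_ge0 j (Mdiff_nneg b_range b_range) x_ge0)
  (ltac:(by rewrite subr_gt0) : 0 < b - a).
have ad_range : 0 <= a + d < rA by apply/andP; split; lra.
exists (a + d); first by apply/andP; split; lra.
apply: (cw_radius_lt n_gt0 (M_nneg ad_range)); exists x; split => // j.
rewrite (row_M_resolvent _ _ a_range ad_range) (_ : a + d - a = d); last by ring.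
have le_D : (x *m Mdiff a (a + d)) 0 j <= (x *m Mdiff b b) 0 j.
  by apply: row_mulmx_lemx x_ge0 (Mdiff_le _ _ b_lt); apply/andP; split; lra.
by have := ler_wpM2l (ltW d_gt0) le_D; have := small j => /=; lra.
Qed.

Lemma cw_radius_M_left a s : 0 < a -> a < rA -> s < cw_radius (M a) ->
  exists2 r, 0 <= r < a & s <= cw_radius (M r).
Proof.
move=> a_gt0 a_lt lt_s.
have a_range : 0 <= a < rA by rewrite (ltW a_gt0) a_lt.
have [y [y_gt0 yM]] := perron_row n_gt0 (M_nneg a_range) (M_irr a_range).
have y_ge0 : nneg_row y by move=> j; apply: ltW.
have [d /andP[d_gt0 d_lt] small] := exists_small_step
  (g := fun j => (y *m M a) 0 j - s * y 0 j) (D := fun j => (y *m Mdiff a a) 0 j)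
  (fun j => ltac:(by rewrite yM [(_ *: y) 0 j]mxE subr_gt0 ltr_pM2r ?y_gt0))
  (fun j => row_mulmx_ge0 j (Mdiff_nneg a_range a_range) y_ge0) a_gt0.
have ad_range : 0 <= a - d < rA by apply/andP; split; lra.
exists (a - d); first by apply/andP; split; lra.
apply: (le_cw_radius (M_nneg ad_range) y_ge0 (pos_row_neq0 n_gt0 y_gt0)) => j.
have := row_M_resolvent y j ad_range a_range; rewrite (_ : a - (a - d) = d); last by ring.
have le_D : (y *m Mdiff (a - d) a) 0 j <= (y *m Mdiff a a) 0 j.
  by apply: row_mulmx_lemx y_ge0 (Mdiff_le _ _ a_lt); apply/andP; split; lra.
by have := ler_wpM2l (ltW d_gt0) le_D; have := small j => /=; lra.
Qed.

(* With z the Perron vector of Q rA and r = rA - d, z (I - Q r) = d z K, hence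
   z K N r = z / d; choosing y with y L = z K gives y M r = z B / d >= y for small d. *)
Lemma cw_radius_M_near_rA : exists2 r, 0 < r < rA & 1 <= cw_radius (M r).
Proof.
have [z [z_gt0 zQ]] := perron_row_rA.
have z_ge0 : nneg_row z by move=> j; apply: ltW.
have [c [c_ge0 c_neq0 zK]] : exists c, [/\ nneg_row c, c != 0 & z *m K = c].
  exists (z *m K); split => //; last exact: row_mulmx_K_neq0.
  by move=> j; apply: row_mulmx_ge0.
have [j1 cj1] := nneg_row_gt0 c_ge0 c_neq0.
pose y : 'rV[R]_n := \row_j (c 0 j / l 0 j).
have yL : y *m diag_mx l = c by apply/rowP => j; rewrite mul_mx_diag !mxE divfK ?gt_eqF.
have y_ge0 : nneg_row y by move=> j; rewrite mxE divr_ge0 ?c_ge0 // ltW.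
have y_neq0 : y != 0 by apply: contraTneq cj1 => y0; rewrite -yL y0 mul0mx mxE ltxx.
have zB_gt0 j : 0 < (z *m B) 0 j.
  have [i Bij] := B_col j.
  apply: lt_le_trans (row_mulmx_entry_ge i j B_ge0 z_ge0).
  by rewrite mulr_gt0 // lt_neqAle eq_sym Bij B_ge0.
have [d /andP[d_gt0 d_lt] small] := exists_small_step zB_gt0 y_ge0 rA_gt0.
have r_range : 0 <= rA - d < rA by apply/andP; split; lra.
exists (rA - d); first by apply/andP; split; lra.
have cN : c *m N (rA - d) = d^-1 *: z.
  have zQr : z *m (1%:M - Q (rA - d)) = d *: c.
    rewrite (Q_sub (rA - d) rA) (_ : rA - (rA - d) = d); last by ring.
    by rewrite mulmxBr mulmx1 mulmxBr zQ opprB addrC subrK -scalemxAr zK.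
  rewrite -[z in RHS](mulmxK (N_unitmx r_range)) zQr -scalemxAl.
  by rewrite scalerA mulVf ?gt_eqF // scale1r.
apply: (le_cw_radius (M_nneg r_range) y_ge0 y_neq0) => j.
rewrite mul1r M_N !mulmxA yL cN -scalemxAl [X in _ <= X]mxE ler_pdivlMl //.
exact: ltW.
Qed.

Lemma exists_cw_radius_M_eq1 : cw_radius (M 0) < 1 ->
  exists2 rs, 0 < rs < rA & cw_radius (M rs) = 1.
Proof.
move=> M0_lt1; have [r0 /andP[r0_gt0 r0_lt] M_r0] := cw_radius_M_near_rA.
pose S := [set r | 0 <= r < r0 /\ cw_radius (M r) < 1].
have S0 : S 0 by split; rewrite ?lexx.
have S_ub : ubound S r0 by move=> r [/andP[_ /ltW]].
have S_le r : S r -> r <= sup S by apply: (ub_le_sup (ex_intro _ r0 S_ub)).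
have rs_le : sup S <= r0 by apply: ge_sup; first by exists 0.
have below r : 0 <= r < sup S -> cw_radius (M r) < 1.
  case/andP=> r_ge0 /(sup_gt (ex_intro _ 0 S0)) [r' [/andP[_ r'_lt] M_r'] lt_r].
  by apply: le_lt_trans M_r'; apply: cw_radius_M_le (ltW lt_r) (lt_trans r'_lt r0_lt).
have rs_gt0 : 0 < sup S.
  have [r /andP[r_gt0 r_lt] M_r] := cw_radius_M_right (lexx 0) r0_gt0 r0_lt M0_lt1.
  have Sr : S r by split => //; rewrite (ltW r_gt0) r_lt.
  exact: lt_le_trans r_gt0 (S_le r Sr).
have rs_lt : sup S < rA := le_lt_trans rs_le r0_lt.
exists (sup S); first by rewrite rs_gt0.
apply/le_anti/andP; split; rewrite leNgt; apply/negP => M_rs.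
  have [r /andP[r_ge0 r_lt] M_r] := cw_radius_M_left rs_gt0 rs_lt M_rs.
  by have := below r; rewrite r_ge0 r_lt ltNge M_r => /(_ isT).
have rs_lt0 : sup S < r0.
  by rewrite lt_neqAle rs_le andbT; apply: contraTneq M_rs => ->; rewrite -leNgt.
have [r /andP[lt_r r_lt] M_r] := cw_radius_M_right (ltW rs_gt0) rs_lt0 r0_lt M_rs.
have := S_le r; rewrite leNgt lt_r => /(_ _)/negP; apply; split => //.
by rewrite r_lt (le_trans (ltW rs_gt0) (ltW lt_r)).
Qed.

Lemma M_unit_crossing : spec_rad (M 0) < 1 ->
  exists rs : R,
    [/\ 0 < rs < rA,
        spec_rad (M rs) = 1,
        (forall r, 0 < r < rA -> spec_rad (M r) = 1 -> r = rs),
        (forall r, 0 <= r < rs -> spec_rad (M r) < 1) &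
        (forall r, rs < r < rA ->
           1 < spec_rad (M r) /\
           ~ (exists w : 'cV[R]_n,
                (forall j, 0 < w j 0) /\
                (forall j, 0 <= (w^T *m (1%:M - M r)) 0 j)))].
Proof.
move=> M0_lt1; have M0 : cw_radius (M 0) < 1 by rewrite -spec_rad_M ?lexx.
have [rs /andP[rs_gt0 rs_lt] M_rs] := exists_cw_radius_M_eq1 M0.
have range r : 0 <= r -> r < rA -> 0 <= r < rA by move=> -> ->.
have below r : 0 <= r < rs -> cw_radius (M r) < 1.
  by case/andP=> r_ge0 lt_r; rewrite -M_rs cw_radius_M_lt.
have above r : rs < r -> r < rA -> 1 < cw_radius (M r).
  by move=> lt_r r_lt; rewrite -M_rs cw_radius_M_lt ?ltW.
exists rs; split; first by rewrite rs_gt0.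
- by rewrite spec_rad_M ?range ?ltW.
- move=> r /andP[r_gt0 r_lt]; rewrite spec_rad_M ?range ?ltW // => M_r.
  case: (ltgtP r rs) => [lt_r|lt_r|//]; last by move: (above r lt_r r_lt); rewrite M_r ltxx.
  by move: (below r); rewrite ltW //= lt_r M_r ltxx => /(_ isT).
- move=> r /andP[r_ge0 lt_r]; rewrite spec_rad_M ?range ?(lt_trans lt_r) //.
  by apply: below; rewrite r_ge0.
move=> r /andP[lt_r r_lt]; have r_ge0 : 0 <= r by rewrite ltW ?(lt_trans rs_gt0).
rewrite spec_rad_M ?range //; split => [|[w [w_gt0 wM]]]; first exact: above.
suff : cw_radius (M r) <= 1 by rewrite leNgt above.
apply: (cw_radius_le_supereig n_gt0 (M_nneg (range r r_ge0 r_lt)) (w := w^T)) => j.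
  by rewrite mxE.
have := wM j; rewrite mulmxBr mulmx1 mul1r; move: (w^T *m M r) => u.
by rewrite !mxE subr_ge0.
Qed.

End Model.

Theorem mainTheorem9 (R : realType) (n : nat) (hn : (2 <= n)%N)
  (A K B : 'M[R]_n) (delta l : 'rV[R]_n) (rA : R)
  (hA : nonneg_mx A) (hK : nonneg_mx K) (hK0 : K != 0)
  (hdelta : forall j, 0 < delta 0 j <= 1)
  (hl : forall j, 0 < l 0 j)
  (hB : nonneg_mx B) (hBcol : forall j, exists i, B i j != 0)
  (hirr : irreducible_mx (A + K *m diag_mx delta))
  (hrho : spec_rad (A + K *m diag_mx delta) < 1)
  (hrA : 0 < rA) (hrAdef : spec_rad (A + K *m diag_mx delta + rA *: K) = 1)
  (hM0 : spec_rad (Mfun (diag_mx l) (A + K *m diag_mx delta) K B 0) < 1) :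
  let M := Mfun (diag_mx l) (A + K *m diag_mx delta) K B in
  exists rs : R,
    [/\ 0 < rs < rA,
        spec_rad (M rs) = 1,
        (forall r, 0 < r < rA -> spec_rad (M r) = 1 -> r = rs),
        (forall r, 0 <= r < rs -> spec_rad (M r) < 1) &
        (forall r, rs < r < rA ->
           1 < spec_rad (M r) /\
           ~ (exists w : 'cV[R]_n,
                (forall j, 0 < w j 0) /\
                (forall j, 0 <= (w^T *m (1%:M - M r)) 0 j)))].
Proof.
have delta_ge0 j : 0 <= delta 0 j by case/andP: (hdelta j) => /ltW.
exact (M_unit_crossing (ltnW hn) hA hK hK0 delta_ge0 hl hB hBcol hirr hrA hrAdef hM0).
Qed.
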